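(* Let $(\mathrm{Con},\sqsubseteq,(s_i)_{i \in G})$ be a spatial constraint system whose underlying lattice $(\mathrm{Con},\sqsubseteq)$ is completely distributive. For $K \subseteq G$ define $\delta^+_K : \mathrm{Con} \to \mathrm{Con}$ by \[ \delta^+_K(c) = \bigwedge\left\{ \bigsqcup_{k \in K} s_k(a_k) \;\middle|\; (a_k)_{k \in K} \in \mathrm{Con}^K \text{ and } \bigsqcup_{k \in K} a_k \sqsupseteq c \right\}. \] Then, for any $K \subseteq G$, $\delta^+_K$ is a space function.
   Context: A constraint system is a complete lattice $(\mathrm{Con}, \sqsubseteq)$ with join $\sqcup$ (and $\bigsqcup$ for arbitrary joins), bottom $\mathit{true}$; $\bigwedge$ denotes the greatest lower bound (meet) of a set in $(\mathrm{Con},\sqsubseteq)$, and $c \sqsupseteq d$ means $d \sqsubseteq c$. A space function is a continuous self-map $f:\mathrm{Con}\to\mathrm{Con}$ (i.e., preserving joins of directed sets) such that $f(\mathit{true})=\mathit{true}$ and $f(c \sqcup d) = f(c) \sqcup f(d)$ for all $c,d$. A spatial constraint system $(\mathrm{Con},\sqsubseteq,(s_i)_{i \in G})$ is a constraint system equipped with a space function $s_i$ for each agent $i$ of a possibly infinite set $G$. $\mathrm{Con}^K$ is the set of $K$-tuples, i.e., functions $K \to \mathrm{Con}$. A lattice is completely distributive if it is complete and for any doubly indexed family $\{x_{ij}\}_{i\in I, j \in J_i}$, $\bigsqcup_{i\in I}\bigwedge_{j\in J_i} x_{ij} = \bigwedge_{f\in F}\bigsqcup_{i \in I} x_{i f(i)}$,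 where $F$ is the class of choice functions $f$ with $f(i)\in J_i$. *)

From Stdlib Require Import Classical.

Set Implicit Arguments.

Record CLattice := {
  car :> Type;
  le : car -> car -> Prop;
  sup : (car -> Prop) -> car;
  le_refl : forall x, le x x;
  le_trans : forall x y z, le x y -> le y z -> le x z;
  le_antisym : forall x y, le x y -> le y x -> x = y;
  sup_ub : forall (S : car -> Prop) x, S x -> le x (sup S);
  sup_least : forall (S : car -> Prop) y, (forall x, S x -> le x y) -> le (sup S) y
}.

Arguments le {c}.
Arguments sup {c}.

Section Ops.
Variable C : CLattice.

Definition inf (S : C -> Prop) : C := sup (fun y => forall x, S x -> le y x).

Definition join (x y : C) : C := sup (fun z => z = x \/ z = y).

Definition bot : C := sup (fun _ => False).

Definition bigsup (I : Type) (F : I -> C) : C := sup (fun z => exists i, z = F i).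
Definition biginf (I : Type) (F : I -> C) : C := inf (fun z => exists i, z = F i).

Definition directed (D : C -> Prop) : Prop :=
  (exists x, D x) /\
  (forall x y, D x -> D y -> exists z, D z /\ le x z /\ le y z).

Definition continuous (f : C -> C) : Prop :=
  forall D : C -> Prop, directed D ->
    f (sup D) = sup (fun z => exists x, D x /\ z = f x).

Definition space_function (f : C -> C) : Prop :=
  continuous f /\ f bot = bot /\ (forall c d, f (join c d) = join (f c) (f d)).

Definition completely_distributive : Prop :=
  forall (I : Type) (J : I -> Type) (x : forall i, J i -> C),
    bigsup (fun i => biginf (fun j : J i => x i j)) =
    biginf (fun f : (forall i, J i) => bigsup (fun i => x i (f i))).

End Ops.

Arguments bot {C}.
Arguments join {C}.
Arguments inf {C}.

Definition spatial_cs (C : CLattice) (G : Type) (s : G -> C -> C) : Prop :=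
  forall i, @space_function C (s i).

(** δ^+_K(c) = ⋀ { ⊔_{k∈K} s_k(a_k) | (a_k) ∈ Con^K, ⊔_{k∈K} a_k ⊒ c },
    with K ⊆ G given as a predicate and Con^K = functions {k | K k} -> Con. *)
Definition delta_plus (C : CLattice) (G : Type) (s : G -> C -> C)
    (K : G -> Prop) (c : C) : C :=
  inf (fun z => exists a : {k : G | K k} -> C,
         le c (@bigsup C _ a) /\
         z = @bigsup C _ (fun k : {k : G | K k} => s (proj1_sig k) (a k))).

(** Space functions preserve arbitrary joins (a join is the directed join of
    its finite subjoins).  For a set [S], complete distributivity rewrites
    [⊔_{x ∈ S} δ⁺_K(x) = ⊔_x ⋀_{a^x} ⊔_k s_k(a^x_k)] as a meet, over choices
    [x ↦ a^x] of decompositions [x ⊑ ⊔_k a^x_k], of [⊔_x ⊔_k s_k(a^x_k)].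
    Each choice yields the decomposition [a_k := ⊔_x a^x_k] of [⊔ S], and
    [⊔_k s_k(a_k) = ⊔_x ⊔_k s_k(a^x_k)] because every [s_k] preserves joins;
    hence [δ⁺_K(⊔ S) ⊑ ⊔_{x ∈ S} δ⁺_K(x)].  Together with monotonicity,
    [δ⁺_K] preserves all joins and is therefore a space function. *)

From Stdlib Require Import List.
Set Implicit Arguments.

Local Arguments bigsup {C I}.
Local Arguments biginf {C I}.

Section CompleteLattice.
Context {C : CLattice}.

Definition image (f : C -> C) (S : C -> Prop) : C -> Prop :=
  fun z => exists x, S x /\ z = f x.

Lemma sup_ext (P Q : C -> Prop) : (forall x, P x <-> Q x) -> sup P = sup Q.
Proof.
  intros H; apply le_antisym; apply sup_least; intros x Hx; apply sup_ub, H; exact Hx.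
Qed.

Lemma inf_ext (P Q : C -> Prop) : (forall x, P x <-> Q x) -> inf P = inf Q.
Proof.
  intros H; apply sup_ext; intros y; split; intros Hy x Hx; apply Hy, H; exact Hx.
Qed.

Lemma inf_lb (P : C -> Prop) z : P z -> le (inf P) z.
Proof. intros Hz; apply sup_least; intros y Hy; exact (Hy z Hz). Qed.

Lemma inf_glb (P : C -> Prop) y : (forall z, P z -> le y z) -> le y (inf P).
Proof. intros H; apply (sup_ub _ (fun y => forall x, P x -> le y x)); exact H. Qed.

Lemma le_bigsup (I : Type) (F : I -> C) i : le (F i) (bigsup F).
Proof. apply sup_ub; exists i; reflexivity. Qed.

Lemma bigsup_least (I : Type) (F : I -> C) y : (forall i, le (F i) y) -> le (bigsup F) y.
Proof. intros H; apply sup_least; intros z [i ->]; apply H. Qed.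

Lemma bigsup_ext (I : Type) (F F' : I -> C) :
  (forall i, F i = F' i) -> bigsup F = bigsup F'.
Proof.
  intros H; apply sup_ext; intros z; split; intros [i ->]; exists i; auto.
Qed.

Lemma sup_image_bigsup (f : C -> C) (S : C -> Prop) :
  sup (image f S) = bigsup (fun i : {x | S x} => f (proj1_sig i)).
Proof.
  apply sup_ext; intros z; split.
  - intros [x [Hx ->]]; exists (exist _ x Hx); reflexivity.
  - intros [[x Hx] ->]; exists x; auto.
Qed.

Lemma join_ub_l (x y : C) : le x (join x y).
Proof. apply sup_ub; auto. Qed.

Lemma join_ub_r (x y : C) : le y (join x y).
Proof. apply sup_ub; auto. Qed.

Lemma join_least (x y z : C) : le x z -> le y z -> le (join x y) z.
Proof. intros Hx Hy; apply sup_least; intros w [-> | ->]; assumption. Qed.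

Lemma join_idPr (x y : C) : le x y -> join x y = y.
Proof.
  intros H; apply le_antisym; [apply join_least; auto using le_refl | apply join_ub_r].
Qed.

Lemma bot_least (x : C) : le bot x.
Proof. apply sup_least; intros _ []. Qed.

Definition finite_join (l : list C) : C := fold_right join bot l.

Lemma finite_join_app_ub_l (l1 l2 : list C) : le (finite_join l1) (finite_join (l1 ++ l2)).
Proof.
  induction l1 as [|x l IH]; simpl; [apply bot_least|].
  apply join_least; [apply join_ub_l | eapply le_trans; [exact IH | apply join_ub_r]].
Qed.

Lemma finite_join_app_ub_r (l1 l2 : list C) : le (finite_join l2) (finite_join (l1 ++ l2)).
Proof.
  induction l1 as [|x l IH]; simpl; [apply le_refl | eapply le_trans; [exact IH | apply join_ub_r]].
Qed.

Definition finite_joins (S : C -> Prop) : C -> Prop :=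
  fun y => exists l, Forall S l /\ y = finite_join l.

Lemma finite_joins_directed (S : C -> Prop) : directed C (finite_joins S).
Proof.
  split.
  - exists bot, nil; auto.
  - intros x y [l1 [H1 ->]] [l2 [H2 ->]]; exists (finite_join (l1 ++ l2)); split.
    + exists (l1 ++ l2); split; [apply Forall_app|]; auto.
    + split; [apply finite_join_app_ub_l | apply finite_join_app_ub_r].
Qed.

Lemma sup_le_sup_finite_joins (S : C -> Prop) : le (sup S) (sup (finite_joins S)).
Proof.
  apply sup_least; intros x Hx; eapply le_trans; [|apply sup_ub; exists (x :: nil); auto].
  apply join_ub_l.
Qed.

Section SpaceFunction.
Variable f : C -> C.
Hypothesis f_space : space_function C f.

Lemma space_function_monotone x y : le x y -> le (f x) (f y).
Proof.
  destruct f_space as [_ [_ f_join]]; intros H.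
  rewrite <- (join_idPr x y H), f_join; apply join_ub_l.
Qed.

Lemma space_function_finite_join (S : C -> Prop) l :
  Forall S l -> le (f (finite_join l)) (sup (image f S)).
Proof.
  destruct f_space as [_ [f_bot f_join]].
  induction 1 as [|x l Hx _ IH]; simpl.
  - rewrite f_bot; apply bot_least.
  - rewrite f_join; apply join_least; [apply sup_ub; exists x; auto | exact IH].
Qed.

Lemma space_function_sup_le (S : C -> Prop) : le (f (sup S)) (sup (image f S)).
Proof.
  eapply le_trans; [apply space_function_monotone, sup_le_sup_finite_joins|].
  destruct f_space as [f_cont _]; rewrite (f_cont _ (finite_joins_directed S)).
  apply sup_least; intros z [y [[l [Hl ->]] ->]]; apply space_function_finite_join, Hl.
Qed.

End SpaceFunction.

Lemma sup_preserving_space_function (f : C -> C) :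
  (forall x y, le x y -> le (f x) (f y)) ->
  (forall S, le (f (sup S)) (sup (image f S))) -> space_function C f.
Proof.
  intros f_mono f_sup.
  assert (f_sup_eq : forall S, f (sup S) = sup (image f S)).
  { intros S; apply le_antisym; [apply f_sup|].
    apply sup_least; intros z [x [Hx ->]]; apply f_mono, sup_ub, Hx. }
  split; [|split].
  - intros D _; apply f_sup_eq.
  - apply le_antisym; [|apply bot_least].
    unfold bot; rewrite f_sup_eq; apply sup_least; intros z [x [[] _]].
  - intros x y; unfold join at 1; rewrite f_sup_eq; apply sup_ext; intros z; split.
    + intros [w [[-> | ->] ->]]; auto.
    + intros [-> | ->]; eexists; eauto.
Qed.

End CompleteLattice.

Section DeltaPlus.
Variables (C : CLattice) (G : Type) (s : G -> C -> C) (K : G -> Prop).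

Let agent := {k : G | K k}.
Local Notation delta := (@delta_plus C G s K).

Definition decomposition (c : C) := {a : agent -> C | le c (bigsup a)}.

Definition spatial_join (a : agent -> C) : C :=
  bigsup (fun k : agent => s (proj1_sig k) (a k)).

Lemma delta_plus_biginf c :
  delta c = biginf (fun a : decomposition c => spatial_join (proj1_sig a)).
Proof.
  apply inf_ext; intros z; split.
  - intros [a [Ha ->]]; exists (exist _ a Ha); reflexivity.
  - intros [[a Ha] ->]; exists a; auto.
Qed.

Lemma delta_plus_monotone x y : le x y -> le (delta x) (delta y).
Proof.
  intros Hxy; apply inf_glb; intros z [a [Ha ->]].
  apply inf_lb; exists a; split; [eapply le_trans|]; eauto.
Qed.

Hypothesis s_space : spatial_cs C s.
Hypothesis C_distributive : completely_distributive C.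

Lemma delta_plus_sup_le (S : C -> Prop) :
  le (delta (sup S)) (sup (image delta S)).
Proof.
  rewrite sup_image_bigsup.
  erewrite bigsup_ext by (intros i; apply delta_plus_biginf).
  rewrite C_distributive.
  apply inf_glb; intros z [choice ->].
  set (a := fun k : agent => bigsup (fun i : {x | S x} => proj1_sig (choice i) k)).
  assert (a_decomposes : le (sup S) (bigsup a)).
  { apply sup_least; intros x Hx.
    eapply le_trans; [exact (proj2_sig (choice (exist _ x Hx)))|].
    apply bigsup_least; intros k; eapply le_trans; [|apply (le_bigsup a k)].
    apply (le_bigsup (fun i : {x | S x} => proj1_sig (choice i) k) (exist _ x Hx)). }
  eapply le_trans; [apply inf_lb; exists a; split; [exact a_decomposes | reflexivity]|].
  apply bigsup_least; intros k.
  eapply le_trans; [apply (space_function_sup_le (s_space (proj1_sig k)))|].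
  apply sup_least; intros w [v [[i ->] ->]].
  eapply le_trans; [|apply le_bigsup with (i := i)].
  apply (le_bigsup (fun k : agent => s (proj1_sig k) (proj1_sig (choice i) k)) k).
Qed.

End DeltaPlus.

Theorem mainTheorem6 (C : CLattice) (G : Type) (s : G -> C -> C) :
  @spatial_cs C G s -> completely_distributive C ->
  forall K : G -> Prop, @space_function C (@delta_plus C G s K).
Proof.
  intros s_space C_distributive K.
  apply sup_preserving_space_function.
  - apply delta_plus_monotone.
  - apply delta_plus_sup_le; assumption.
Qed.
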